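(* Let $s\in\{0,\tfrac12\}$, $\lambda\in\mathbb{C}$, and let $\sigma\in\mathrm{Aut}(\mathfrak{L}^s_\lambda)$ be normalized, i.e. there are $\epsilon\in\{1,-1\}$, $\alpha,\mu\in\mathbb{C}\setminus\{0\}$, $\beta\in\mathbb{C}$ with $\sigma(L_m)=\epsilon\alpha^mL_{\epsilon m}+m\alpha^m\beta I_{\epsilon m}$ and $\sigma(I_m)=\alpha^m\mu I_{\epsilon m}$ for all $m\in\mathbb{Z}$. Then for every $p\in s+\mathbb{Z}$, $\sigma(G_p)\in\mathbb{C}G_{\epsilon p}+\mathrm{span}_{\mathbb{C}}\{H_q:q\in s+\mathbb{Z}\}$.
   Context: For $s\in\{0,\tfrac12\}$ and $\lambda\in\mathbb{C}$, $\mathfrak{L}^s_\lambda$ is the complex Lie superalgebra with basis $\{L_m,I_m,G_p,H_p : m\in\mathbb{Z},\ p\in s+\mathbb{Z}\}$, even part spanned by the $L_m,I_m$, odd part spanned by the $G_p,H_p$, with brackets $[L_m,L_n]=(m-n)L_{m+n}$, $[L_m,I_n]=(m-n)I_{m+n}$, $[L_m,H_p]=(\tfrac m2-p)H_{m+p}$, $[L_m,G_p]=(\tfrac m2-p)G_{m+p}+\lambda(m+1)H_{m+p}$, $[I_m,G_p]=(m-2p)H_{m+p}$, $[G_p,G_q]=I_{p+q}$, plus super-antisymmetry; all other brackets of basis elements are zero. $\mathrm{Aut}(\mathfrak{L})$ is the group of bijective parity-preserving linear maps $\sigma$ with $\sigma([x,y])=[\sigma(x),\sigma(y)]$. *)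

From HB Require Import structures.
From mathcomp Require Import all_boot all_order all_algebra.
Set Implicit Arguments. Unset Strict Implicit. Unset Printing Implicit Defensive.
Import Order.TTheory GRing.Theory Num.Theory.
Local Open Scope ring_scope.

(* The parameter [half : bool] encodes s:
   half = false <-> s = 0, half = true <-> s = 1/2.
   BL m = L_m, BI m = I_m (m : int);
   BG k = G_(k+s), BH k = H_(k+s) (k : int), i.e. odd indices p = k + s. *)
Inductive basis := BL of int | BI of int | BG of int | BH of int.

Definition basis_eqb (a b : basis) : bool :=
  match a, b with
  | BL m, BL n => m == n
  | BI m, BI n => m == n
  | BG m, BG n => m == n
  | BH m, BH n => m == n
  | _, _ => false
  end.

Definition is_even (b : basis) : bool :=
  match b with BL _ | BI _ => true | _ => false end.

(* Elements of the algebra are finite formal linear combinations of basis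
   elements, compared through their coefficients. *)
Definition coef (C : fieldType) (x : seq (C * basis)) (b : basis) : C :=
  \sum_(t <- x) (if basis_eqb t.2 b then t.1 else 0).

Definition eqv (C : fieldType) (x y : seq (C * basis)) : Prop :=
  forall b, coef x b = coef y b.

Definition scale (C : fieldType) (c : C) (x : seq (C * basis)) :=
  [seq (c * t.1, t.2) | t <- x].

Definition sval (C : fieldType) (half : bool) : C := if half then 2%:R^-1 else 0.
Definition pval (C : fieldType) (half : bool) (k : int) : C := k%:~R + sval C half.

(* bracket of basis elements (all ordered pairs, super-antisymmetry built in) *)
Definition br (C : fieldType) (half : bool) (lam : C) (a b : basis)
  : seq (C * basis) :=
  match a, b with
  | BL m, BL n => [:: ((m - n)%:~R, BL (m + n))]
  | BL m, BI n => [:: ((m - n)%:~R, BI (m + n))]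
  | BI n, BL m => [:: (- (m - n)%:~R, BI (m + n))]
  | BL m, BH k => [:: (m%:~R / 2%:R - pval C half k, BH (m + k))]
  | BH k, BL m => [:: (- (m%:~R / 2%:R - pval C half k), BH (m + k))]
  | BL m, BG k => [:: (m%:~R / 2%:R - pval C half k, BG (m + k));
                      (lam * (m + 1)%:~R, BH (m + k))]
  | BG k, BL m => [:: (- (m%:~R / 2%:R - pval C half k), BG (m + k));
                      (- (lam * (m + 1)%:~R), BH (m + k))]
  | BI m, BG k => [:: (m%:~R - 2%:R * pval C half k, BH (m + k))]
  | BG k, BI m => [:: (- (m%:~R - 2%:R * pval C half k), BH (m + k))]
  | BG k, BG l => [:: (1, BI (k + l + (half : nat)%:Z))]
  | _, _ => [::]
  end.

Definition brv (C : fieldType) (half : bool) (lam : C) (x y : seq (C * basis))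
  : seq (C * basis) :=
  flatten [seq scale (s.1 * t.1) (br half lam s.2 t.2) | s <- x, t <- y].

Definition apply (C : fieldType) (f : basis -> seq (C * basis)) (x : seq (C * basis))
  : seq (C * basis) :=
  flatten [seq scale t.1 (f t.2) | t <- x].

Definition is_aut (C : fieldType) (half : bool) (lam : C)
  (f : basis -> seq (C * basis)) : Prop :=
  [/\ (forall b b', is_even b != is_even b' -> coef (f b) b' = 0),
      (forall x y, eqv (apply f x) (apply f y) -> eqv x y),
      (forall y, exists x, eqv (apply f x) y) &
      (forall x y, eqv (apply f (brv half lam x y))
                       (brv half lam (apply f x) (apply f y)))].

(* index k' with k' + s = eps * (k + s), for eps in {1,-1} *)
Definition eps_odd (half : bool) (eps : int) (k : int) : int :=
  if eps == 1 then k else - k - (half : nat)%:Z.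

From HB Require Import structures.
From mathcomp Require Import all_boot all_order all_algebra.
From mathcomp Require Import zify ring.
Set Implicit Arguments. Unset Strict Implicit. Unset Printing Implicit Defensive.
Import Order.TTheory GRing.Theory Num.Theory.
Local Open Scope ring_scope.

(* sigma(I_m) is a multiple of some I_n, and a bracket with an I never produces
   a G; writing H_k as a nonzero multiple of [I_m, G_(k-m)] shows that sigma(H_k)
   has no G-component.  Applying sigma to [L_0, G_k] = -k' G_k + lam H_k, where
   sigma(L_0) = eps L_0, then gives k' a_q = eps q' a_q for the G_q-coefficient
   a_q of sigma(G_k) (writing k' = k + s, q' = q + s), so a_q = 0 unless
   q' = eps k'.  Parity rules out L- and I-components. *)

Lemma basis_eqbP : Equality.axiom basis_eqb.
Proof. by case=> m [] n /=; try (by constructor); apply: (iffP eqP) => [->|[]]. Qed.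

HB.instance Definition _ := hasDecEq.Build basis basis_eqbP.

Section FormalSums.
Variable C : fieldType.
Implicit Types (x y : seq (C * basis)) (a b : basis).

Lemma coefE x b : coef x b = \sum_(t <- x) (if t.2 == b then t.1 else 0).
Proof. by []. Qed.

Lemma coef_cons t x b : coef (t :: x) b = (if t.2 == b then t.1 else 0) + coef x b.
Proof. by rewrite /coef big_cons. Qed.

Lemma coef_cat x y b : coef (x ++ y) b = coef x b + coef y b.
Proof. by rewrite /coef big_cat. Qed.

Lemma coef_scale c x b : coef (scale c x) b = c * coef x b.
Proof.
rewrite /coef big_map mulr_sumr; apply: eq_bigr => t _ /=.
by case: basis_eqb; rewrite ?mulr0.
Qed.

Lemma coef_flatten (xs : seq (seq (C * basis))) b :
  coef (flatten xs) b = \sum_(x <- xs) coef x b.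
Proof.
elim: xs => [|x xs IH]; first by rewrite /coef !big_nil.
by rewrite big_cons /= coef_cat IH.
Qed.

Lemma weighted_sum_coef (G : basis -> C) x (S : seq basis) :
  uniq S -> {subset map snd x <= S} ->
  \sum_(t <- x) t.1 * G t.2 = \sum_(a <- S) coef x a * G a.
Proof.
move=> uS xS; under [RHS]eq_bigr => a _ do rewrite coefE big_distrl.
rewrite exchange_big /=; apply: eq_big_seq => t tx.
rewrite (bigD1_seq t.2) ?xS ?map_f //= eqxx big1 ?addr0 // => a /negbTE.
by rewrite eq_sym => ->; rewrite mul0r.
Qed.

Lemma eqv_weighted_sum (G : basis -> C) x x' : eqv x x' ->
  \sum_(t <- x) t.1 * G t.2 = \sum_(t <- x') t.1 * G t.2.
Proof.
set S := undup (map snd (x ++ x')).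
move=> xx'; rewrite !(@weighted_sum_coef G _ S) ?undup_uniq //.
- by apply: eq_bigr => a _; rewrite xx'.
- by move=> a ax'; rewrite mem_undup map_cat mem_cat ax' orbT.
- by move=> a ax; rewrite mem_undup map_cat mem_cat ax.
Qed.

Lemma weighted_sum_pred1 (G : basis -> C) x b :
  (forall a, a != b -> G a = 0) -> \sum_(t <- x) t.1 * G t.2 = coef x b * G b.
Proof.
move=> Gb; rewrite coefE big_distrl; apply: eq_bigr => t _ /=.
by case: eqP => [->|/eqP /Gb ->]; rewrite ?mul0r ?mulr0.
Qed.

Definition H_coords (y : seq (C * basis)) : seq (C * int) :=
  pmap (fun t => if t.2 is BH j then Some (t.1, j) else None) y.

Lemma coef_H_coords y b :
  coef [seq (t.1, BH t.2) | t <- H_coords y] b = if b is BH _ then coef y b else 0.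
Proof.
elim: y => [|[c a] y IH]; first by rewrite !coefE !big_nil; case: b.
rewrite coef_cons; case: a => j /=; rewrite ?coef_cons IH {IH}.
all: by case: b => i //=; rewrite ?add0r ?addr0.
Qed.

Lemma eqv_BG_plus_H_coords y p :
  (forall b, is_even b -> coef y b = 0) ->
  (forall q, q != p -> coef y (BG q) = 0) ->
  eqv y ((coef y (BG p), BG p) :: [seq (t.1, BH t.2) | t <- H_coords y]).
Proof.
move=> y_odd y_BG b; rewrite coef_cons coef_H_coords.
case: b => i; rewrite /= ?addr0 ?add0r //; try by rewrite y_odd.
rewrite -[BG p == BG i]/(p == i).
by case: eqVneq => [->|neq] //; rewrite y_BG // eq_sym.
Qed.

End FormalSums.

Section LinearExtensions.
Variables (C : fieldType) (half : bool) (lam : C).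
Implicit Types (x y : seq (C * basis)) (a b : basis) (f : basis -> seq (C * basis)).

Lemma coef_apply f x b : coef (apply f x) b = \sum_(t <- x) t.1 * coef (f t.2) b.
Proof. by rewrite /apply coef_flatten big_map; apply: eq_bigr => t _; rewrite coef_scale. Qed.

Lemma coef_brv x y b : coef (brv half lam x y) b =
  \sum_(s <- x) s.1 * \sum_(t <- y) t.1 * coef (br half lam s.2 t.2) b.
Proof.
rewrite /brv coef_flatten big_flatten /= big_map; apply: eq_bigr => s _.
rewrite big_map mulr_sumr; apply: eq_bigr => t _.
by rewrite coef_scale mulrA.
Qed.

Lemma coef_brvC x y b : coef (brv half lam x y) b =
  \sum_(t <- y) t.1 * \sum_(s <- x) s.1 * coef (br half lam s.2 t.2) b.
Proof.
rewrite coef_brv; under eq_bigr => s _ do rewrite mulr_sumr.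
rewrite exchange_big; apply: eq_bigr => t _; rewrite mulr_sumr.
by apply: eq_bigr => s _; rewrite mulrCA.
Qed.

Lemma eqv_apply f x x' : eqv x x' -> eqv (apply f x) (apply f x').
Proof. by move=> xx' b; rewrite !coef_apply (eqv_weighted_sum (fun a => coef (f a) b) xx'). Qed.

Lemma eqv_brv x x' y y' : eqv x x' -> eqv y y' ->
  eqv (brv half lam x y) (brv half lam x' y').
Proof.
move=> xx' yy' b; rewrite coef_brv.
rewrite (eqv_weighted_sum (fun a => \sum_(t <- y) t.1 * coef (br half lam a t.2) b) xx').
rewrite -coef_brv coef_brvC.
rewrite (eqv_weighted_sum (fun a => \sum_(s <- x') s.1 * coef (br half lam s.2 a) b) yy').
by rewrite -coef_brvC.
Qed.

Lemma apply_single f a : eqv (apply f [:: (1, a)]) (f a).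
Proof. by move=> b; rewrite coef_apply big_seq1 mul1r. Qed.

Lemma brv_single a a' : eqv (brv half lam [:: (1, a)] [:: (1, a')]) (br half lam a a').
Proof. by move=> b; rewrite coef_brv !big_seq1 !mul1r. Qed.

Lemma br_BI_BG n a q : coef (br half lam (BI n) a) (BG q) = 0.
Proof. by case: a => i; rewrite /= coefE ?big_cons ?big_nil /= ?addr0. Qed.

Lemma br_BL0_BG a q : a != BG q -> coef (br half lam (BL 0) a) (BG q) = 0.
Proof.
case: a => i; rewrite /= coefE ?big_cons ?big_nil /= ?addr0 //.
by rewrite add0r; case: eqP => // ->.
Qed.

Lemma coef_brv_BI_BG c n y q : coef (brv half lam [:: (c, BI n)] y) (BG q) = 0.
Proof. by rewrite coef_brv big_seq1 big1 ?mulr0 // => t _; rewrite br_BI_BG mulr0. Qed.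

Lemma coef_brv_BL0_BG c d n y q :
  coef (brv half lam [:: (c, BL 0); (d, BI n)] y) (BG q) =
  - (c * pval C half q) * coef y (BG q).
Proof.
rewrite coef_brv big_cons big_seq1 /= [X in _ + d * X]big1; last first.
  by move=> t _; rewrite br_BI_BG mulr0.
rewrite (weighted_sum_pred1 y (br_BL0_BG ^~ q)).
rewrite /= [coef [:: _; _] _]coefE !big_cons big_nil /= add0r eqxx mul0r.
by rewrite !addr0 mulr0; ring.
Qed.

End LinearExtensions.

Lemma two_pval (C : numFieldType) half k :
  2 * pval C half k = (2 * k + (half : nat)%:Z)%:~R.
Proof. by rewrite /pval /sval intrD intrM; case: half => /=; [field | ring]. Qed.

Section Automorphism.
Variables (C : numFieldType) (half : bool) (lam : C) (f : basis -> seq (C * basis)).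
Hypothesis f_hom : forall x y,
  eqv (apply f (brv half lam x y)) (brv half lam (apply f x) (apply f y)).

Lemma hom_br a a' : eqv (apply f (br half lam a a')) (brv half lam (f a) (f a')).
Proof.
move=> b; rewrite -(eqv_apply f (brv_single half lam a a')) f_hom.
by apply: eqv_brv; apply: apply_single.
Qed.

Lemma image_BH_no_BG :
  (forall m, exists c n, eqv (f (BI m)) [:: (c, BI n)]) ->
  forall k q, coef (f (BH k)) (BG q) = 0.
Proof.
(* [I_m, G_(k-m)] = (3m - 2k - 2s) H_k, and this integer is odd for m = 1 + 2s. *)
move=> fI k q; pose m := (half : nat)%:Z + 1.
have [c [n fIm]] := fI m.
have := hom_br (BI m) (BG (k - m)) (BG q).
rewrite (eqv_brv half lam fIm (fun _ => erefl)) coef_brv_BI_BG coef_apply big_seq1 /=.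
rewrite (addrC m) subrK => /eqP; rewrite mulf_eq0 => /orP [|/eqP //].
by rewrite two_pval -intrB intr_eq0 /m; lia.
Qed.

Lemma image_BG_coef_BG e d n k q :
  eqv (f (BL 0)) [:: (e, BL 0); (d, BI n)] -> coef (f (BH k)) (BG q) = 0 ->
  pval C half k * coef (f (BG k)) (BG q) = e * pval C half q * coef (f (BG k)) (BG q).
Proof.
move=> fL0 noG; have := hom_br (BL 0) (BG k) (BG q).
rewrite (eqv_brv half lam fL0 (fun _ => erefl)) coef_brv_BL0_BG.
rewrite coef_apply big_cons big_seq1 /= add0r noG mulr0 addr0.
by rewrite mul0r sub0r !mulNr => /oppr_inj.
Qed.

End Automorphism.

Lemma pval_eq_eps_odd (C : numFieldType) half (eps k q : int) :
  eps = 1 \/ eps = -1 -> pval C half k = eps%:~R * pval C half q ->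
  q = eps_odd half eps k.
Proof.
move=> eps_pm1 /(congr1 (fun z => 2 * z)); rewrite mulrCA !two_pval -intrM.
move/eqP; rewrite eqr_int /eps_odd => /eqP.
by case: eps_pm1 => ->; rewrite ?eqxx //=; lia.
Qed.

Theorem lemma3p5 (C : numClosedFieldType) (half : bool) (lam : C)
  (f : basis -> seq (C * basis)) (eps : int) (alpha mu beta : C) :
  is_aut half lam f ->
  (eps = 1 \/ eps = -1) -> alpha != 0 -> mu != 0 ->
  (forall m : int, eqv (f (BL m))
     [:: (eps%:~R * alpha ^ m, BL (eps * m));
         (m%:~R * alpha ^ m * beta, BI (eps * m))]) ->
  (forall m : int, eqv (f (BI m)) [:: (alpha ^ m * mu, BI (eps * m))]) ->
  forall k : int, exists (c : C) (h : seq (C * int)),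
    eqv (f (BG k)) ((c, BG (eps_odd half eps k)) :: [seq (t.1, BH t.2) | t <- h]).
Proof.
move=> [f_par _ _ f_hom] eps_pm1 _ _ fL fI k.
have fI_line m : exists c n, eqv (f (BI m)) [:: (c, BI n)].
  by exists (alpha ^ m * mu), (eps * m).
have fL0 : eqv (f (BL 0)) [:: (eps%:~R, BL 0); (0%:~R * beta, BI 0)].
  by move=> b; rewrite fL mulr0 !expr0z !mulr1.
exists (coef (f (BG k)) (BG (eps_odd half eps k))), (H_coords (f (BG k))).
apply: eqv_BG_plus_H_coords => [b b_even | q q_neq].
  by apply: f_par; rewrite b_even.
apply/eqP; apply: contraR q_neq => a_neq0; apply/eqP/(pval_eq_eps_odd eps_pm1).
apply: (mulIf a_neq0).
exact: (image_BG_coef_BG f_hom fL0 (image_BH_no_BG f_hom fI_line k q)).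
Qed.
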